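(* Let $\mathcal C$ and $\mathcal E$ be epireflective subcategories of $\mathbf{Top}$ such that $\mathbf{Top}_0\supseteq\mathcal C\supseteq\mathcal E$, and let $X$ be a topological space. Then $\mathrm{r}_{\mathcal C}X=\mathrm{r}_{\mathcal E}X$ (that is, the canonical continuous map $\mathrm{r}_{(\mathrm{r}_{\mathcal C}X,\mathcal E)}\colon\mathrm{r}_{\mathcal C}X\to\mathrm{r}_{\mathcal E}X$ is a homeomorphism) if and only if every $\mathcal C$-open subset of $X$ is $\mathcal E$-open.
   Context: $\mathbf{Top}_0$ is the class of $T_0$ spaces. An epireflective subcategory $\mathcal C$ of $\mathbf{Top}$ is a full, isomorphism-closed subcategory closed under products and subspaces; each space $X$ has a reflection $\mathrm{r}_{\mathcal C}X\in\mathcal C$ with a continuous surjection $\mathrm{r}_{(X,\mathcal C)}\colon X\to\mathrm{r}_{\mathcal C}X$ through which every continuous map from $X$ into a space of $\mathcal C$ factors uniquely. For a class $\mathcal A$ of spaces, a subset of $X$ is an $\mathcal A$-oset if it equals $f^{-1}(U)$ for some continuous $f\colon X\to Y$ with $Y\in\mathcal A$ and $U$ open in $Y$; the $\mathcal A$-osets form a subbase of a topology on $X$ whose members are called $\mathcal A$-open sets. *)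

From HB Require Import structures.
From mathcomp Require Import all_boot all_order all_algebra.
From mathcomp Require Import all_classical.
From mathcomp Require Import topology_structure separation_axioms
  function_spaces subtype_topology.
Set Implicit Arguments. Unset Strict Implicit. Unset Printing Implicit Defensive.
Local Open Scope classical_set_scope.

(* A class of topological spaces (a full subcategory of Top). *)
Definition space_class := topologicalType -> Prop.

Definition is_homeomorphism (X Y : topologicalType) (f : X -> Y) : Prop :=
  continuous f /\ exists h : Y -> X, [/\ continuous h, cancel f h & cancel h f].

Definition iso_closed (C : space_class) : Prop :=
  forall (X Y : topologicalType) (f : X -> Y), is_homeomorphism f -> C X -> C Y.

Definition prod_closed (C : space_class) : Prop :=
  forall (I : Type) (T : I -> topologicalType),
    (forall i, C (T i)) -> C (prod_topology T : topologicalType).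

Definition sub_closed (C : space_class) : Prop :=
  forall (X : topologicalType) (A : set X), C X -> C (set_type A : topologicalType).

Definition epireflective (C : space_class) : Prop :=
  [/\ iso_closed C, prod_closed C & sub_closed C].

Definition is_reflection (C : space_class) (X R : topologicalType) (r : X -> R)
  : Prop :=
  [/\ C R, continuous r, (forall y : R, exists x : X, r x = y) &
      forall (Y : topologicalType) (f : X -> Y), C Y -> continuous f ->
        (exists h : R -> Y, continuous h /\ h \o r = f) /\
        (forall h1 h2 : R -> Y, continuous h1 -> continuous h2 ->
            h1 \o r = f -> h2 \o r = f -> h1 = h2)].

Definition oset (A : space_class) (X : topologicalType) (U : set X) : Prop :=
  exists (Y : topologicalType) (f : X -> Y) (V : set Y),
    [/\ A Y, continuous f, open V & U = f @^-1` V].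

(* A-open sets: open in the topology with the A-osets as subbase *)
Definition A_open (A : space_class) (X : topologicalType) (U : set X) : Prop :=
  forall x, U x -> exists (n : nat) (B : 'I_n -> set X),
    [/\ forall i, oset A (B i), forall i, B i x &
        forall y, (forall i, B i y) -> U y].

From HB Require Import structures.
From mathcomp Require Import all_boot all_order all_algebra.
From mathcomp Require Import all_classical.
From mathcomp Require Import topology_structure separation_axioms
  function_spaces subtype_topology.
Set Implicit Arguments. Unset Strict Implicit. Unset Printing Implicit Defensive.
Local Open Scope classical_set_scope.

(* A reflection r : X -> R of X in a class A identifies the A-osets of X, and
   hence also the A-open sets of X, with the preimages under r of the open
   sets of R.  So if every C-open set is E-open, every open set of r_C X is the
   preimage under g of an open set of r_E X.  As r_C X is T0 this makes g
   injective, it is onto because r_E is, and its inverse is then continuous.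
   Conversely, if g is a homeomorphism then every C-oset r_C^-1(O) equals
   r_E^-1(g(O)), an E-oset. *)

Section reflection_open_sets.
Variables (A : space_class) (X R : topologicalType) (r : X -> R).
Hypothesis reflection_r : is_reflection A r.

Lemma osetP (B : set X) :
  oset A B <-> exists2 O : set R, open O & B = r @^-1` O.
Proof.
have [AR r_cont _ r_univ] := reflection_r.
split=> [[Y [f [V [AY f_cont oV ->]]]] | [O oO ->]].
- have [[k [k_cont <-]] _] := r_univ Y f AY f_cont.
  by exists (k @^-1` V); first exact: (continuousP k).1.
- by exists R, r, O.
Qed.

Lemma A_open_preimage (U : set X) :
  A_open A U -> exists2 O : set R, open O & U = r @^-1` O.
Proof.
move=> AU; exists (interior [set z | forall x, r x = z -> U x]).
  exact: open_interior.
apply/seteqP; split=> [x /AU [n [B [osetB Bx BU]]] | x /interior_subset]; last exact.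
have near_B i : \forall z \near r x, forall y, r y = z -> B i y.
  have [O oO B_eq] := (osetP (B i)).1 (osetB i).
  have Orx : O (r x) by move: (Bx i); rewrite B_eq.
  by apply: filterS (open_nbhs_nbhs (conj oO Orx)) => z Oz y ryz; rewrite B_eq /= ryz.
by apply: filterS (filter_forall _ near_B) => z Bz y yz; apply: BU => i; exact: Bz.
Qed.

Lemma preimage_A_open (O : set R) : open O -> A_open A (r @^-1` O).
Proof.
move=> oO x Ox; exists 1, (fun=> r @^-1` O); split=> // [_ | y /(_ ord0)//].
by apply/osetP; exists O.
Qed.

End reflection_open_sets.

Lemma A_open_sub (A B : space_class) (X : topologicalType) (U : set X) :
  (forall V : set X, oset A V -> oset B V) -> A_open A U -> A_open B U.
Proof.
move=> AB AU x /AU [n [V [osetV Vx VU]]].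
by exists n, V; split=> // i; apply: AB.
Qed.

Definition open_initial (S T : topologicalType) (g : S -> T) :=
  forall W : set S, open W -> exists2 O : set T, open O & W = g @^-1` O.

Lemma kolmogorov_open_initial_inj (S T : topologicalType) (g : S -> T) :
  kolmogorov_space S -> open_initial g -> injective g.
Proof.
move=> S_T0 g_initial a b gab; have [//|/S_T0 [N]] := eqVneq a b.
have nbhs_same x y : g x = g y -> N \in nbhs x -> N y.
  move=> gxy; rewrite inE nbhsE => -[W [oW Wx] WN]; apply: WN.
  by have [O _ W_eq] := g_initial W oW; move: Wx; rewrite W_eq /= gxy.
by case=> -[Na]; rewrite inE /setC /= => nN; exfalso; apply: nN;
  [exact: nbhs_same gab Na | exact: nbhs_same (esym gab) Na].
Qed.

Lemma open_initial_bij_homeomorphism (S T : topologicalType) (g : S -> T) :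
  continuous g -> bijective g -> open_initial g -> is_homeomorphism g.
Proof.
move=> g_cont [h gK hK] g_initial; split=> //; exists h; split=> //.
apply/continuousP => W /g_initial [O oO ->].
by rewrite -comp_preimage (_ : g \o h = id) ?preimage_id //; apply/funext.
Qed.

Lemma inj_surj_bijective (S T : Type) (g : S -> T) :
  injective g -> (forall y, exists x, g x = y) -> bijective g.
Proof.
move=> g_inj /choice [h hK].
by exists h => // x; apply: g_inj; rewrite hK.
Qed.

Section comparison_of_reflections.
Variables (C E : space_class) (X RC RE : topologicalType).
Variables (rC : X -> RC) (rE : X -> RE) (g : RC -> RE).
Hypotheses (reflection_C : is_reflection C rC) (reflection_E : is_reflection E rE).
Hypothesis g_rC : g \o rC = rE.

Lemma oset_sub_of_homeomorphism :
  is_homeomorphism g -> forall B : set X, oset C B -> oset E B.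
Proof.
move=> [_ [h [h_cont gK _]]] B /(osetP reflection_C) [O oO ->].
apply/(osetP reflection_E); exists (h @^-1` O); first exact: (continuousP h).1.
by rewrite -g_rC -comp_preimage /= (_ : h \o (g \o rC) = rC) //; apply/funext=> x; exact: gK.
Qed.

Lemma A_open_sub_open_initial :
  (forall U : set X, A_open C U -> A_open E U) -> open_initial g.
Proof.
move=> CE W oW; have [_ _ rC_surj _] := reflection_C.
have [O oO rCW] := A_open_preimage reflection_E (CE _ (preimage_A_open reflection_C oW)).
exists O => //.
have rC_range : range rC = setT.
  by apply/seteqP; split=> // y _; have [x] := rC_surj y; exists x.
by rewrite -(image_preimage W rC_range) rCW -g_rC comp_preimage image_preimage.
Qed.

End comparison_of_reflections.

Theorem theorem6p1 (C E : space_class) :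
  epireflective C -> epireflective E ->
  (forall Y : topologicalType, C Y -> kolmogorov_space Y) ->
  (forall Y : topologicalType, E Y -> C Y) ->
  forall (X RC RE : topologicalType) (rC : X -> RC) (rE : X -> RE)
         (g : RC -> RE),
    is_reflection C rC -> is_reflection E rE ->
    continuous g -> g \o rC = rE ->
    (is_homeomorphism g <-> forall U : set X, A_open C U -> A_open E U).
Proof.
(* Given the reflections and g, the closure properties of C and E and the
   inclusion of E in C play no further role. *)
move=> _ _ C_T0 _ X RC RE rC rE g reflC reflE g_cont g_rC.
split=> [g_homeo U | CE].
  by apply: A_open_sub; exact: oset_sub_of_homeomorphism reflC reflE g_rC g_homeo.
have g_initial := A_open_sub_open_initial reflC reflE g_rC CE.
have [RC_C _ _ _] := reflC; have [_ _ rE_surj _] := reflE.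
apply: (open_initial_bij_homeomorphism g_cont _ g_initial).
apply: inj_surj_bijective.
  exact: kolmogorov_open_initial_inj (C_T0 _ RC_C) g_initial.
by move=> z; have [x <-] := rE_surj z; exists (rC x); rewrite -g_rC.
Qed.
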